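(* Let $k$ be a positive integer and let $G$ be the union of a set $\mathcal L$ of $k$ pairwise edge-disjoint complete subgraphs, each with $k$ vertices (so $V(G)=\bigcup_{L\in\mathcal L}V(L)$ and $E(G)=\bigcup_{L\in\mathcal L}E(L)$). Then $\omega(G)=k$. Furthermore, if $G$ has a maximal clique of size $k$ whose vertex set is not the vertex set of a member of $\mathcal L$, then $G$ is chordal.
   Context: All graphs are finite and simple; $\omega$ is the clique number. A graph is chordal if it has no induced cycle of length at least $4$. *)

From mathcomp Require Import all_boot.
Set Implicit Arguments. Unset Strict Implicit. Unset Printing Implicit Defensive.

Section Graphs.
Variable T : finType.

(* A simple graph on the vertex type T is given by an adjacency relation e
   (symmetric and irreflexive in our use). *)

Definition is_clique (e : rel T) (Q : {set T}) : bool :=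
  [forall x in Q, forall y in Q, (x != y) ==> e x y].

Definition maximal_clique (e : rel T) (Q : {set T}) : bool :=
  is_clique e Q &&
  [forall R : {set T}, (is_clique e R && (Q \subset R)) ==> (R == Q)].

Definition clique_number (e : rel T) : nat :=
  \max_(Q : {set T} | is_clique e Q) #|Q|.

Definition induced_cycle (e : rel T) (s : seq T) : Prop :=
  [/\ 4 <= size s, uniq s &
      forall (x0 : T) (i j : nat), i < size s -> j < size s ->
        e (nth x0 s i) (nth x0 s j) =
        (j == i.+1 %% size s) || (i == j.+1 %% size s)].

Definition chordal (e : rel T) : Prop := forall s : seq T, ~ induced_cycle e s.

Definition union_adj (k : nat) (L : 'I_k -> {set T}) : rel T :=
  fun x y => (x != y) && [exists i, (x \in L i) && (y \in L i)].

End Graphs.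

From mathcomp Require Import all_boot all_order all_algebra.
From mathcomp Require Import ring lra zify.
Set Implicit Arguments. Unset Strict Implicit. Unset Printing Implicit Defensive.
Import Order.TTheory GRing.Theory Num.Theory.

(* The k cliques behave like the lines of a linear space. If a clique Q of the union
   is not inside a single line, every point of Q lies on at least two lines, so the
   point-line incidence matrix A of Q has Gram matrix A A^T = J + D with J all-ones
   and D positive diagonal; hence A has full row rank and #|Q| <= k (Fisher's
   inequality). When #|Q| = k, A is invertible and A^T (J + D)^-1 A = 1 shows that
   any two lines meet inside Q. A vertex outside Q therefore lies on only one line,
   so its neighbourhood is a clique; since no vertex of an induced cycle has this
   property, an induced cycle would lie inside the clique Q, which is absurd. *)

Section GraphChordality.
Variables (T : finType) (e : rel T).

Lemma is_cliqueP (Q : {set T}) :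
  reflect {in Q &, forall x y, x != y -> e x y} (is_clique e Q).
Proof.
apply: (iffP forallP) => [clique x y xQ yQ | clique x].
  by move/implyP/(_ xQ)/forallP/(_ y)/implyP/(_ yQ)/implyP: (clique x).
apply/implyP => xQ; apply/forallP => y; apply/implyP => yQ.
by apply/implyP; apply: clique.
Qed.

Definition simplicial (v : T) : bool := is_clique e [set u | e v u].

Definition cycle_adj (n i j : nat) : bool := (j == i.+1 %% n) || (i == j.+1 %% n).

Lemma succ_modn_eq n i j : i < n ->
  (j == i.+1 %% n) = ((i.+1 == n) && (j == 0)) || ((i.+1 < n) && (j == i.+1)).
Proof.
move=> lt_in; case: (eqVneq i.+1 n) => [->|ne]; first by rewrite modnn; lia.
by rewrite modn_small; lia.
Qed.

Lemma cycle_adj_neighbours n i : 4 <= n -> i < n ->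
  exists a b, [/\ a < n, b < n, a != b &
    [&& cycle_adj n i a, cycle_adj n i b & ~~ cycle_adj n a b]].
Proof.
rewrite /cycle_adj => n4 lt_in; have [-> | i0] := eqVneq i 0.
  by exists 1, n.-1; rewrite !succ_modn_eq; try split; lia.
have [-> | in1] := eqVneq i n.-1.
  by exists 0, n.-2; rewrite !succ_modn_eq; try split; lia.
by exists i.+1, i.-1; rewrite !succ_modn_eq; try split; lia.
Qed.

Lemma induced_cycle_not_simplicial s x0 i :
  induced_cycle e s -> i < size s -> ~~ simplicial (nth x0 s i).
Proof.
case=> n4 s_uniq adjE lt_is.
have [a [b [lt_as lt_bs ab /and3P[ia ib nab]]]] := cycle_adj_neighbours n4 lt_is.
rewrite /cycle_adj in ia ib nab; apply/is_cliqueP => /(_ (nth x0 s a) (nth x0 s b)).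
rewrite !inE !adjE // ia ib nth_uniq // ab => /(_ isT isT isT).
by rewrite (negbTE nab).
Qed.

Lemma chordal_of_simplicial_off_clique (Q : {set T}) :
  is_clique e Q -> (forall v, v \notin Q -> simplicial v) -> chordal e.
Proof.
move=> Qclique off_Q s cyc; have [n4 s_uniq adjE] := cyc.
have [x0 _] : exists x0 : T, true by case: s n4 {cyc adjE s_uniq} => // x; exists x.
have inQ i : i < size s -> nth x0 s i \in Q.
  by move=> lt_is; apply: contraR (induced_cycle_not_simplicial x0 cyc lt_is); apply: off_Q.
have /negP[] : ~~ e (nth x0 s 0) (nth x0 s 2).
  by rewrite adjE /cycle_adj ?succ_modn_eq; lia.
by apply: (is_cliqueP _ Qclique); rewrite ?inQ ?nth_uniq //; apply: leq_trans n4.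
Qed.

End GraphChordality.

Section GramOnePlusDiagonal.
Local Open Scope ring_scope.
Variables (R : realFieldType) (m n : nat) (A : 'M[R]_(m, n)).
Hypothesis gram_offdiag : forall p q, p != q -> (A *m A^T) p q = 1.
Hypothesis gram_diag_gt1 : forall p, 1 < (A *m A^T) p p.

Lemma gram_entry p q : (A *m A^T) p q = \sum_i A p i * A q i.
Proof. by rewrite mxE; apply: eq_bigr => i _; rewrite mxE. Qed.

Lemma gram_quadratic_form (v : 'rV[R]_m) :
  \sum_i (v *m A) 0 i ^+ 2 =
  \sum_p v 0 p ^+ 2 * ((A *m A^T) p p - 1) + (\sum_p v 0 p) ^+ 2.
Proof.
have -> : \sum_i (v *m A) 0 i ^+ 2 = \sum_p \sum_q v 0 p * v 0 q * (A *m A^T) p q.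
  under eq_bigr do rewrite mxE expr2 mulr_suml.
  rewrite exchange_big; apply: eq_bigr => p _.
  under eq_bigr do rewrite mulr_sumr.
  rewrite exchange_big; apply: eq_bigr => q _.
  by rewrite gram_entry mulr_sumr; apply: eq_bigr => i _; ring.
rewrite expr2 mulr_suml -big_split; apply: eq_bigr => p _.
rewrite mulr_sumr (bigD1 p) //= [in RHS](bigD1 p) //= addrA; congr (_ + _).
  by rewrite expr2; ring.
by apply: eq_bigr => q qp; rewrite gram_offdiag 1?eq_sym // mulr1.
Qed.

Lemma gram_row_free : row_free A.
Proof.
rewrite -kermx_eq0; apply/eqP/row_matrixP => r; rewrite row0.
set v := row r _; have vA0 : v *m A = 0 by rewrite -row_mul mulmx_ker row0.
have d_ge0 p : 0 <= (A *m A^T) p p - 1 by rewrite subr_ge0 ltW.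
have terms_ge0 p : 0 <= v 0 p ^+ 2 * ((A *m A^T) p p - 1) by rewrite mulr_ge0 ?sqr_ge0.
have /psumr_eq0P terms0 : \sum_p v 0 p ^+ 2 * ((A *m A^T) p p - 1) = 0.
  have := gram_quadratic_form v; rewrite vA0 big1 => [|i _]; last by rewrite mxE expr0n.
  have := sqr_ge0 (\sum_p v 0 p).
  have : 0 <= \sum_p v 0 p ^+ 2 * ((A *m A^T) p p - 1) by apply: sumr_ge0.
  lra.
apply/rowP => p; have /eqP := terms0 (fun p _ => terms_ge0 p) p isT.
by rewrite mulf_eq0 sqrf_eq0 subr_eq0 (gt_eqF (gram_diag_gt1 p)) orbF !mxE => /eqP.
Qed.

End GramOnePlusDiagonal.

Section SquareGramOnePlusDiagonal.
Local Open Scope ring_scope.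
Variables (R : realFieldType) (n : nat) (A : 'M[R]_n).
Hypothesis gram_offdiag : forall p q, p != q -> (A *m A^T) p q = 1.
Hypothesis gram_diag_gt1 : forall p, 1 < (A *m A^T) p p.

Let d p := (A *m A^T) p p - 1.
Let beta i := \sum_p (d p)^-1 * A p i.
Let c := 1 + \sum_p (d p)^-1.

Let d_gt0 p : 0 < d p. Proof. by rewrite subr_gt0. Qed.

Let c_gt0 : 0 < c.
Proof. by rewrite ltr_wpDr // sumr_ge0 // => p _; rewrite invr_ge0 ltW. Qed.

Let gram_weighted_sum (w : 'I_n -> R) q :
  \sum_p w p * (A *m A^T) p q = w q * d q + \sum_p w p.
Proof.
rewrite (bigD1 q) // [in RHS](bigD1 q) //= addrA /d; congr (_ + _); first ring.
by apply: eq_bigr => p /gram_offdiag ->; rewrite mulr1.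
Qed.

Let sum_mul_gram (w : 'I_n -> R) q :
  \sum_j (\sum_p w p * A p j) * A q j = \sum_p w p * (A *m A^T) p q.
Proof.
under eq_bigr do rewrite mulr_suml.
rewrite exchange_big; apply: eq_bigr => p _.
by rewrite gram_entry mulr_sumr; apply: eq_bigr => j _; rewrite mulrA.
Qed.

(* With D = diag d and J the all-ones matrix, A A^T = D + J, and Sherman-Morrison
   gives (D + J)^-1 = D^-1 - D^-1 J D^-1 / c: this is A^T (A A^T)^-1 A = 1 entrywise. *)
Let trmx_gram_inv_mul i j :
  \sum_p (d p)^-1 * A p i * A p j - beta i * beta j / c = (i == j)%:R.
Proof.
pose N := \matrix_(i, j) (\sum_p (d p)^-1 * A p i * A p j - beta i * beta j / c - (i == j)%:R).
have NA0 : N *m A^T = 0.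
  apply/matrixP => a q; rewrite !mxE.
  under eq_bigr do rewrite !mxE mulrBl mulrBl.
  rewrite !big_split /= !sumrN sum_mul_gram gram_weighted_sum.
  have -> : \sum_b beta a * beta b / c * A q b = beta a / c * \sum_b beta b * A q b.
    by rewrite mulr_sumr; apply: eq_bigr => b _; ring.
  rewrite sum_mul_gram gram_weighted_sum.
  have -> : \sum_b (a == b)%:R * A q b = A q a.
    rewrite (bigD1 a) //= eqxx mul1r big1 ?addr0 // => b.
    by rewrite eq_sym => /negbTE ->; rewrite mul0r.
  have := d_gt0 q; have := c_gt0; rewrite /c => /lt0r_neq0 c_neq0 /lt0r_neq0 d_neq0.
  by rewrite /beta; field; rewrite d_neq0 c_neq0.
have unitAT : A^T \in unitmx by rewrite unitmx_tr -row_free_unit gram_row_free.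
have /matrixP/(_ i j) : N = 0 by rewrite -(mulmxK unitAT N) NA0 mul0mx.
by rewrite !mxE => /eqP; rewrite subr_eq0 => /eqP.
Qed.

Lemma gram_square_columns_meet : (forall p i, 0 <= A p i) ->
  forall i j, exists p, A p i * A p j != 0.
Proof.
move=> A_ge0.
have term_ge0 l p : 0 <= (d p)^-1 * A p l by rewrite mulr_ge0 // invr_ge0 ltW.
have meet_of_sum_gt0 i j :
    0 < \sum_p (d p)^-1 * A p i * A p j -> exists p, A p i * A p j != 0.
  case: (pickP (fun p => A p i * A p j != 0)) => [p ? _ | all0]; first by exists p.
  by rewrite big1 ?ltxx // => p _; move/negbFE/eqP: (all0 p); rewrite -mulrA => ->; rewrite mulr0.
have sum_eq i j : \sum_p (d p)^-1 * A p i * A p j = (i == j)%:R + beta i * beta j / c.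
  by rewrite -trmx_gram_inv_mul subrK.
have beta_gt0 l : 0 < beta l.
  have [p] : exists p, A p l * A p l != 0.
    apply: meet_of_sum_gt0; rewrite sum_eq eqxx.
    by apply: ltr_pwDl => //; rewrite divr_ge0 ?(ltW c_gt0) // -expr2 sqr_ge0.
  rewrite mulf_eq0 orbb => Apl_neq0.
  rewrite lt0r psumr_neq0 ?sumr_ge0 ?andbT //; apply/hasP; exists p; rewrite ?mem_index_enum //.
  by rewrite mulr_gt0 ?invr_gt0 // lt0r Apl_neq0 A_ge0.
move=> i j; apply: meet_of_sum_gt0; rewrite sum_eq.
by apply: ltr_wpDl => //; rewrite divr_gt0 ?mulr_gt0.
Qed.

End SquareGramOnePlusDiagonal.

Section EdgeDisjointCliques.
Variables (T : finType) (k : nat) (L : 'I_k -> {set T}).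
Hypothesis card_L : forall i, #|L i| = k.
Hypothesis edge_disjoint : forall i j : 'I_k, i != j -> forall x y : T, x != y ->
  x \in L i -> y \in L i -> x \in L j -> y \in L j -> False.
Hypothesis cover_L : forall x : T, exists i, x \in L i.
Local Notation G := (union_adj L).

Definition common_lines (x y : T) : {set 'I_k} := [set i | (x \in L i) && (y \in L i)].

Lemma union_adjP x y : reflect (x != y /\ exists i, x \in L i /\ y \in L i) (G x y).
Proof.
apply: (iffP andP) => [[-> /existsP[i /andP[? ?]]] | [-> [i [? ?]]]]; split=> //.
  by exists i.
by apply/existsP; exists i; apply/andP.
Qed.

Lemma line_clique i : is_clique G (L i).
Proof. by apply/is_cliqueP => x y ? ? xy; apply/union_adjP; split=> //; exists i. Qed.

Lemma common_lines_adj x y : G x y -> #|common_lines x y| = 1.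
Proof.
case/union_adjP => xy [i [xi yi]]; apply/eqP/cards1P; exists i.
apply/setP => j; rewrite !inE; apply/andP/eqP => [[xj yj] | ->] //.
by apply/eqP; apply: contraT => ji; case: (edge_disjoint ji xy xj yj xi yi).
Qed.

Lemma two_lines_through (Q : {set T}) x :
  is_clique G Q -> (forall i, ~~ (Q \subset L i)) -> x \in Q ->
  1 < #|common_lines x x|.
Proof.
move=> Qclique not_sub xQ; have [i xi] := cover_L x.
have /subsetPn[z zQ ziL] := not_sub i.
have xz : x != z by apply: contraNneq ziL => <-.
have /union_adjP[_ [j [xj zj]]] := is_cliqueP _ _ Qclique x z xQ zQ xz.
have ji : j != i by apply: contraNneq ziL => <-.
by rewrite (cardsD1 i) (cardsD1 j) !inE xi xj ji; lia.
Qed.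

Section Incidence.
Local Open Scope ring_scope.
Variables (m : nat) (f : 'I_m -> T).

Definition incidence_mx : 'M[rat]_(m, k) := \matrix_(p, i) (f p \in L i)%:R.

Lemma incidence_gram p q :
  (incidence_mx *m incidence_mx^T) p q = #|common_lines (f p) (f q)|%:R.
Proof.
rewrite gram_entry -sum1_card natr_sum [RHS]big_mkcond; apply: eq_bigr => i _.
by rewrite !mxE inE; case: (f p \in L i); case: (f q \in L i); rewrite ?mulr0 ?mul0r ?mulr1.
Qed.

Variable Q : {set T}.
Hypotheses (f_inj : injective f) (f_Q : forall p, f p \in Q) (Qclique : is_clique G Q).

Lemma clique_incidence_gram_offdiag p q :
  p != q -> (incidence_mx *m incidence_mx^T) p q = 1.
Proof.
move=> pq; have fpq : f p != f q by rewrite (inj_eq f_inj).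
by rewrite incidence_gram common_lines_adj // (is_cliqueP _ _ Qclique).
Qed.

Lemma clique_incidence_gram_diag_gt1 :
  (forall i, ~~ (Q \subset L i)) -> forall p, 1 < (incidence_mx *m incidence_mx^T) p p.
Proof. by move=> not_sub p; rewrite incidence_gram ltr1n (two_lines_through Qclique). Qed.

End Incidence.

Lemma clique_card_le Q : is_clique G Q -> #|Q| <= k.
Proof.
move=> Qclique; have [i Q_sub | no_line] := pickP (fun i => Q \subset L i).
  by rewrite -(card_L i) subset_leq_card.
have not_sub i : ~~ (Q \subset L i) by rewrite no_line.
have f_inj := @enum_val_inj _ (mem Q); have f_Q := @enum_valP _ (mem Q).
have : row_free (incidence_mx (@enum_val _ (mem Q))).
  apply: gram_row_free; first exact: clique_incidence_gram_offdiag f_inj f_Q Qclique.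
  exact: clique_incidence_gram_diag_gt1 f_Q Qclique not_sub.
by rewrite -row_leq_rank => /leq_trans; apply; apply: rank_leq_col.
Qed.

Lemma clique_number_union_adj : 0 < k -> clique_number G = k.
Proof.
move=> k_gt0; apply/eqP; rewrite eqn_leq; apply/andP; split.
  by apply/bigmax_leqP => Q; apply: clique_card_le.
by rewrite -{1}(card_L (Ordinal k_gt0)) (leq_bigmax_cond _ (line_clique _)).
Qed.

Section NonLineClique.
Variable Q : {set T}.
Hypotheses (Qclique : is_clique G Q) (card_Q : #|Q| = k) (Q_neq_L : forall i, Q != L i).

Lemma non_line_clique_not_subset i : ~~ (Q \subset L i).
Proof. by apply/negP => Q_sub; move: (Q_neq_L i); rewrite eqEcard Q_sub card_L card_Q leqnn. Qed.

Lemma non_line_clique_lines_meet i j : exists2 x, x \in Q & x \in L i :&: L j.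
Proof.
pose f (p : 'I_k) := enum_val (cast_ord (esym card_Q) p).
have f_inj : injective f by move=> p q /enum_val_inj/cast_ord_inj.
have f_Q p : f p \in Q by apply: enum_valP.
have [|||p] := @gram_square_columns_meet _ _ (incidence_mx f) _ _ _ i j.
- exact: clique_incidence_gram_offdiag.
- exact: clique_incidence_gram_diag_gt1 f_Q Qclique non_line_clique_not_subset.
- by move=> p l; rewrite mxE ler0n.
rewrite !mxE -natrM pnatr_eq0 muln_eq0 !negb_or !eqb0 !negbK => /andP[? ?].
by exists (f p); rewrite ?inE ?f_Q //; apply/andP.
Qed.

Lemma off_non_line_clique_simplicial v : v \notin Q -> simplicial G v.
Proof.
move=> vQ; apply/is_cliqueP => a b; rewrite !inE => /union_adjP[_ [i [vi ai]]].
move=> /union_adjP[_ [j [vj bj]]] ab; apply/union_adjP; split=> //; exists i; split=> //.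
have [-> // | ij] := eqVneq i j.
have [x xQ /setIP[xi xj]] := non_line_clique_lines_meet i j.
have xv : x != v by apply: contraNneq vQ => <-.
by case: (edge_disjoint ij xv xi vi xj vj).
Qed.

End NonLineClique.

End EdgeDisjointCliques.

Theorem lemma3p4 (T : finType) (k : nat) (L : 'I_k -> {set T}) :
  0 < k ->
  (forall i, #|L i| = k) ->
  (forall i j : 'I_k, i != j -> forall x y : T, x != y ->
      x \in L i -> y \in L i -> x \in L j -> y \in L j -> False) ->
  (forall x : T, exists i, x \in L i) ->
  clique_number (union_adj L) = k /\
  ((exists Q : {set T}, [/\ maximal_clique (union_adj L) Q, #|Q| = k &
                            forall i, Q != L i]) ->
   chordal (union_adj L)).
Proof.
move=> k_gt0 card_L edge_disjoint cover_L.
split; first exact: clique_number_union_adj.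
case=> Q [/andP[Qclique _] card_Q Q_neq_L].
apply: (chordal_of_simplicial_off_clique Qclique).
exact: off_non_line_clique_simplicial.
Qed.
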